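(* Let $\mathbf C$ be a category with all finite limits and colimits, and let $\mathsf W,\mathsf C,\mathsf P,\mathsf Q$ be classes of morphisms of $\mathbf C$, each closed under composition and containing all identities, such that: (1) (2-out-of-3) if two of $f$, $g$, $gf$ lie in $\mathsf W$ then so does the third; (2) $\widehat{\mathsf W}=\mathsf W$ and $\widehat{\mathsf C}=\mathsf C$; (3) (a) $\mathsf P\subset\mathsf{RLP}(\mathsf C)$; (b) $\mathsf Q\subset\mathsf{RLP}(\mathsf C\cap\mathsf W)$; (4) every morphism $f$ factors (a) as $f=pi$ with $i\in\mathsf C$, $p\in\mathsf P$, and (b) as $f=qj$ with $j\in\mathsf C\cap\mathsf W$, $q\in\mathsf Q$; (5) $\mathsf P\subset\mathsf W$. Then $\mathsf W$, $\mathsf C$ and $\widehat{\mathsf Q}$ are the weak equivalences, cofibrations and fibrations of a model category structure on $\mathbf C$.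
   Context: $\widehat{\mathsf S}$ denotes the class of morphisms that are retracts (in the arrow category) of elements of $\mathsf S$. $\mathsf{RLP}(\mathsf S)$ is the class of morphisms $p:E\to B$ such that for every commutative square $g\circ i=p\circ f$ with $i:A\to X$ in $\mathsf S$, $f:A\to E$, $g:X\to B$, there is $h:X\to E$ with $ph=g$ and $hi=f$. *)

Set Implicit Arguments.
Unset Strict Implicit.

Record Category := {
  Ob :> Type;
  Hom : Ob -> Ob -> Type;
  comp : forall x y z : Ob, Hom y z -> Hom x y -> Hom x z;
  idm : forall a : Ob, Hom a a;
  comp_assoc : forall a b c d (h : Hom c d) (g : Hom b c) (f : Hom a b),
      comp h (comp g f) = comp (comp h g) f;
  comp_id_l : forall a b (f : Hom a b), comp (idm b) f = f;
  comp_id_r : forall a b (f : Hom a b), comp f (idm a) = f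
}.

Arguments Hom {_} _ _.
Arguments comp {_ x y z} _ _.
Arguments idm {_} _.

Declare Scope cat_scope.
Notation "g \o f" := (comp g f) (at level 40, left associativity) : cat_scope.
Open Scope cat_scope.

Section Defs.
Variable C : Category.

Definition MorClass := forall a b : C, Hom a b -> Prop.

Definition subclass (S T : MorClass) : Prop :=
  forall a b (f : Hom a b), S a b f -> T a b f.

Definition same_class (S T : MorClass) : Prop :=
  forall a b (f : Hom a b), S a b f <-> T a b f.

Definition capM (S T : MorClass) : MorClass :=
  fun a b f => S a b f /\ T a b f.

Definition closed_comp (S : MorClass) : Prop :=
  forall a b c (f : Hom a b) (g : Hom b c), S a b f -> S b c g -> S a c (g \o f).

Definition has_ids (S : MorClass) : Prop := forall a : C, S a a (idm a).

Definition two_out_of_three (W : MorClass) : Prop :=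
  forall a b c (f : Hom a b) (g : Hom b c),
    (W _ _ f -> W _ _ g -> W _ _ (g \o f)) /\
    (W _ _ f -> W _ _ (g \o f) -> W _ _ g) /\
    (W _ _ g -> W _ _ (g \o f) -> W _ _ f).

Definition is_retract {A B X Y : C} (f : Hom A B) (g : Hom X Y) : Prop :=
  exists (i : Hom A X) (r : Hom X A) (j : Hom B Y) (s : Hom Y B),
    r \o i = idm A /\ s \o j = idm B /\ g \o i = j \o f /\ f \o r = s \o g.

Definition hat (S : MorClass) : MorClass :=
  fun A B f => exists (X Y : C) (g : Hom X Y), S X Y g /\ is_retract f g.

Definition RLP (S : MorClass) : MorClass :=
  fun E B p => forall (A X : C) (i : Hom A X), S A X i ->
    forall (f : Hom A E) (g : Hom X B), g \o i = p \o f ->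
      exists h : Hom X E, p \o h = g /\ h \o i = f.

Definition LLP (S : MorClass) : MorClass :=
  fun A X i => forall (E B : C) (p : Hom E B), S E B p ->
    forall (f : Hom A E) (g : Hom X B), g \o i = p \o f ->
      exists h : Hom X E, p \o h = g /\ h \o i = f.

Definition is_terminal (T : C) : Prop :=
  forall a : C, exists u : Hom a T, forall v : Hom a T, v = u.

Definition is_initial (I : C) : Prop :=
  forall a : C, exists u : Hom I a, forall v : Hom I a, v = u.

Definition has_pullbacks : Prop :=
  forall (A B Z : C) (f : Hom A Z) (g : Hom B Z),
    exists (P : C) (p1 : Hom P A) (p2 : Hom P B), f \o p1 = g \o p2 /\
      forall (Q : C) (q1 : Hom Q A) (q2 : Hom Q B), f \o q1 = g \o q2 ->
        exists u : Hom Q P, (p1 \o u = q1 /\ p2 \o u = q2) /\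
          forall v : Hom Q P, p1 \o v = q1 -> p2 \o v = q2 -> v = u.

Definition has_pushouts : Prop :=
  forall (Z A B : C) (f : Hom Z A) (g : Hom Z B),
    exists (P : C) (i1 : Hom A P) (i2 : Hom B P), i1 \o f = i2 \o g /\
      forall (Q : C) (q1 : Hom A Q) (q2 : Hom B Q), q1 \o f = q2 \o g ->
        exists u : Hom P Q, (u \o i1 = q1 /\ u \o i2 = q2) /\
          forall v : Hom P Q, v \o i1 = q1 -> v \o i2 = q2 -> v = u.

Definition has_finite_limits : Prop := (exists T : C, is_terminal T) /\ has_pullbacks.
Definition has_finite_colimits : Prop := (exists I : C, is_initial I) /\ has_pushouts.

Definition factors_through (L R : MorClass) : Prop :=
  forall a b (f : Hom a b), exists (m : C) (i : Hom a m) (p : Hom m b),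
    L a m i /\ R m b p /\ f = p \o i.

(* (Closed) model category structure in the sense of Quillen /
   Dwyer–Spalinski, axioms MC1–MC5. *)
Definition is_model_structure (W Cof Fib : MorClass) : Prop :=
  has_finite_limits /\ has_finite_colimits /\
  two_out_of_three W /\
  subclass (hat W) W /\ subclass (hat Cof) Cof /\ subclass (hat Fib) Fib /\
  subclass Cof (LLP (capM Fib W)) /\ subclass (capM Cof W) (LLP Fib) /\
  factors_through Cof (capM Fib W) /\ factors_through (capM Cof W) Fib.

End Defs.

Open Scope cat_scope.
Set Implicit Arguments.

(* The proof rests
   on the retract argument: if p = q o i and p has the right lifting
   property against i, then p is a retract of q.  Together with the
   stability of RLP(S) under retracts, this gives the two facts that carry
   the theorem:
   - every morphism of P is a retract of a morphism of Q, so factorisation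
     (4a) is a factorisation into a cofibration followed by a trivial
     fibration;
   - a trivial fibration p in Q^ /\ W has the RLP against all cofibrations:
     factor p = q o j by (4a); 2-out-of-3 and P <= W put j in C /\ W, so p is
     a retract of q, which lifts against C by (3a).
   MC1, MC2 and MC3 for W and C are hypotheses; MC3 for Q^ is idempotence
   of retract closure, MC4b is (3b) transported to
   Q^, and MC5b is (4b) since Q <= Q^. *)

Section Retracts.
Variable C : Category.

Lemma retract_refl (X Y : C) (g : Hom X Y) : is_retract g g.
Proof.
  exists (idm X), (idm X), (idm Y), (idm Y).
  repeat split; rewrite ?comp_id_l, ?comp_id_r; reflexivity.
Qed.

Lemma retract_trans (A B X Y U V : C) (f : Hom A B) (g : Hom X Y) (k : Hom U V) :
  is_retract f g -> is_retract g k -> is_retract f k.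
Proof.
  intros [i [r [j [s [Hri [Hsj [Hgi Hfr]]]]]]]
         [i' [r' [j' [s' [Hri' [Hsj' [Hki' Hgr']]]]]]].
  exists (i' \o i), (r \o r'), (j' \o j), (s \o s'). repeat split.
  - rewrite <- comp_assoc, (comp_assoc r' i' i), Hri', comp_id_l. exact Hri.
  - rewrite <- comp_assoc, (comp_assoc s' j' j), Hsj', comp_id_l. exact Hsj.
  - rewrite comp_assoc, Hki', <- !comp_assoc, Hgi. reflexivity.
  - rewrite comp_assoc, Hfr, <- !comp_assoc, Hgr'. reflexivity.
Qed.

Lemma subclass_hat (S : MorClass C) : subclass S (hat S).
Proof. intros X Y g Hg. exists X, Y, g. split; [exact Hg | apply retract_refl]. Qed.

Lemma hat_mono (S T : MorClass C) : subclass S T -> subclass (hat S) (hat T).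
Proof. intros HST A B f [X [Y [g [Hg Hr]]]]. exists X, Y, g. auto. Qed.

Lemma hat_idem (S : MorClass C) : subclass (hat (hat S)) (hat S).
Proof.
  intros A B f [X [Y [g [[U [V [k [Hk Hgk]]]] Hfg]]]].
  exists U, V, k. split; [exact Hk | eapply retract_trans; eauto].
Qed.

End Retracts.

Section Lifting.
Variable C : Category.

Lemma rlp_antitone (S T : MorClass C) : subclass S T -> subclass (RLP T) (RLP S).
Proof. intros HST E B p Hp A X i Hi. apply Hp, HST, Hi. Qed.

Lemma rlp_retract (S : MorClass C) (E B X Y : C) (p : Hom E B) (q : Hom X Y) :
  RLP S q -> is_retract p q -> RLP S p.
Proof.
  intros Hq [i [r [j [s [Hri [Hsj [Hqi Hpr]]]]]]] A K a Ha f g Hsq.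
  destruct (Hq A K a Ha (i \o f) (j \o g)) as [h [Hqh Hha]].
  { rewrite <- comp_assoc, Hsq, !comp_assoc, Hqi. reflexivity. }
  exists (r \o h). split.
  - rewrite comp_assoc, Hpr, <- comp_assoc, Hqh, comp_assoc, Hsj, comp_id_l.
    reflexivity.
  - rewrite <- comp_assoc, Hha, comp_assoc, Hri, comp_id_l. reflexivity.
Qed.

Lemma hat_rlp (S : MorClass C) : subclass (hat (RLP S)) (RLP S).
Proof. intros A B f [X [Y [g [Hg Hr]]]]. eapply rlp_retract; eauto. Qed.

(* The retract argument: if p = q o i and p lifts against i, then p is a
   retract of q (with the lift r : M -> E as retraction of i). *)
Lemma retract_argument (S : MorClass C) (E M B : C)
  (i : Hom E M) (q : Hom M B) (p : Hom E B) :
  RLP S p -> S _ _ i -> p = q \o i -> is_retract p q.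
Proof.
  intros Hp Hi Hpq.
  destruct (Hp E M i Hi (idm E) q) as [r [Hpr Hri]].
  { rewrite comp_id_r. symmetry; exact Hpq. }
  exists i, r, (idm B), (idm B). repeat split.
  - exact Hri.
  - apply comp_id_l.
  - rewrite comp_id_l. symmetry; exact Hpq.
  - rewrite comp_id_l. exact Hpr.
Qed.

End Lifting.

Section Recognition.
Variables (C : Category) (W Cf P Q : MorClass C).
Hypothesis W_2of3 : two_out_of_three W.
Hypothesis P_rlp : subclass P (RLP Cf).
Hypothesis Q_rlp : subclass Q (RLP (capM Cf W)).
Hypothesis factor_P : factors_through Cf P.
Hypothesis factor_Q : factors_through (capM Cf W) Q.
Hypothesis P_W : subclass P W.

Lemma fibration_rlp : subclass (hat Q) (RLP (capM Cf W)).
Proof.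
  intros A B f Hf. apply hat_rlp. exact (hat_mono Q_rlp Hf).
Qed.

(* Every morphism of P is a fibration: factor it by (4b) and apply the
   retract argument, using that P lifts against all cofibrations. *)
Lemma P_fibration : subclass P (hat Q).
Proof.
  intros E B p Hp.
  destruct (factor_Q _ _ p) as [M [j [q [Hj [Hq Hpq]]]]].
  exists M, B, q. split; [exact Hq |].
  eapply retract_argument; [| exact Hj | exact Hpq].
  apply (rlp_antitone (T := Cf)); [intros ? ? ? [H _]; exact H | exact (P_rlp Hp)].
Qed.

Lemma trivial_fibration_rlp : subclass (capM (hat Q) W) (RLP Cf).
Proof.
  intros E B p [Hp HpW].
  destruct (factor_P _ _ p) as [M [j [q [Hj [Hq Hpq]]]]].
  assert (HjW : W _ _ j).
  { destruct (W_2of3 _ _ _ j q) as [_ [_ H]].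
    apply H; [exact (P_W Hq) | rewrite <- Hpq; exact HpW]. }
  apply (rlp_retract (P_rlp Hq)).
  eapply retract_argument; [exact (fibration_rlp Hp) | split; eassumption | exact Hpq].
Qed.

End Recognition.

Theorem mainTheorem17 (C : Category) (W Cf P Q : MorClass C) :
  has_finite_limits C -> has_finite_colimits C ->
  closed_comp W -> has_ids W -> closed_comp Cf -> has_ids Cf ->
  closed_comp P -> has_ids P -> closed_comp Q -> has_ids Q ->
  two_out_of_three W ->
  same_class (hat W) W -> same_class (hat Cf) Cf ->
  subclass P (RLP Cf) -> subclass Q (RLP (capM Cf W)) ->
  factors_through Cf P -> factors_through (capM Cf W) Q ->
  subclass P W ->
  is_model_structure W Cf (hat Q).
Proof.
  intros HL HC _ _ _ _ _ _ _ _ H23 HW HCf HP HQ F1 F2 HPW.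
  split; [exact HL | split; [exact HC | split; [exact H23 |]]].
  repeat split.
  -
    intros a b f Hf; apply HW; exact Hf.
  - intros a b f Hf; apply HCf; exact Hf.
  -
    apply hat_idem.
  -
    intros a x i Hi E B p Hp.
    exact (trivial_fibration_rlp H23 HP HQ F1 HPW Hp _ _ _ Hi).
  -
    intros a x i Hi E B p Hp. exact (fibration_rlp HQ Hp Hi).
  - (* MC5a: (4a), with P <= Q^ /\ W *)
    intros a b f. destruct (F1 a b f) as [m [i [p [Hi [Hp Hf]]]]].
    exists m, i, p. split; [exact Hi | split; [split | exact Hf]].
    + apply (P_fibration HP F2); exact Hp.
    + apply HPW; exact Hp.
  -
    intros a b f. destruct (F2 a b f) as [m [i [q [Hi [Hq Hf]]]]].
    exists m, i, q. split; [exact Hi | split; [| exact Hf]].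
    apply subclass_hat; exact Hq.
Qed.
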